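(* Let $\mathcal{JS}=(\mathcal F,\mathcal F_d,R,\mathcal B)$ be a justification system. For every $x\in\mathcal F_d$ and every interpretation $\mathcal I$, $$S_t(x,\mathcal I)=\bigvee_{\sigma\in\mathfrak S_g(T)}\ \bigwedge_{\tau\in\mathfrak S_g(F)}u(x,\sigma,\tau)\qquad\text{and}\qquad S_g(x,\mathcal I)=\bigvee_{\sigma\in\mathfrak S_p(T)}\ \bigwedge_{\tau\in\mathfrak S_g(F)}u(x,\sigma,\tau).$$
   Context: Let $\mathcal F$ be a set (fact space) containing $\mathcal L=\{\mathbf t,\mathbf f,\mathbf u\}$ with an involution $\sim$ satisfying $\sim\mathbf t=\mathbf f$, $\sim\mathbf u=\mathbf u$, $\sim x\ne x$ for $x\ne\mathbf u$. Truth order on $\mathcal L$: $\mathbf f<_t\mathbf u<_t\mathbf t$; $\bigwedge,\bigvee$ are glb/lub in $(\mathcal L,\le_t)$ ($\bigvee\emptyset=\mathbf f$). A justification frame is $\mathcal{JF}=(\mathcal F,\mathcal F_d,R)$ where $\mathcal F_d\subseteq\mathcal F$ satisfies $\sim\mathcal F_d=\mathcal F_d$, $\mathcal F_d\cap\mathcal L=\emptyset$, and $R\subseteq\mathcal F_d\times2^{\mathcal F}$ is a set of rules $x\gets A$ with nonempty bodies such that every $x\in\mathcal F_d$ heads a rule; $\mathcal F_o=\mathcal F\setminus\mathcal F_d$. A justification is a directed graph $(N,E)$ with labelling $\ell:N\to\mathcal F$ such that each internal node $n$ (node with an outgoing edge) has $\ell(n)\in\mathcal F_d$ and $\ell(n)\gets\{\ell(m):(n,m)\in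 E\}\in R$; graph-like if $\ell$ is injective; tree-like if the underlying undirected graph is acyclic; locally complete if no leaf is labelled by a defined fact. A $\mathcal{JF}$-branch is an infinite sequence of defined facts or a finite sequence $x_0\to\cdots\to x_k$ ($k\ge1$) with $x_0,\dots,x_{k-1}\in\mathcal F_d$, $x_k\in\mathcal F_o$. For a node $n$ of a locally complete justification $J$, $B_J(n)$ is the set of label sequences of maximal paths of $J$ starting at $n$. A branch evaluation $\mathcal B$ maps $\mathcal{JF}$-branches to elements of $\mathcal F$; a justification system is $(\mathcal F,\mathcal F_d,R,\mathcal B)$. An interpretation is $\mathcal I:\mathcal F\to\mathcal L$ with $\mathcal I(\sim x)=\sim\mathcal I(x)$ and $\mathcal I(l)=l$ on $\mathcal L$. $\mathrm{val}(J,n,\mathcal I)=\bigwedge_{b\in B_J(n)}\mathcal I(\mathcal B(b))$. For $x\in\mathcal F_d$, $S_g(x,\mathcal I)$ is the $\bigvee$ of $\mathrm{val}(J,n,\mathcal I)$ over all locally complete graph-like justifications $J$ and nodes $n$ with $\ell(n)=x$; $S_t(x,\mathcal I)$ is the same with tree-like justifications. Game graph $G_{\mathcal{JF}}$: states $S_T=\mathcal F$ (owned by $T$) and $S_F=\{r_{x\gets A}:x\gets A\in R\}$ (owned by $F$), edges $(x,r_{x\gets A})$ and $(r_{x\gets A},y)$ for every rule $x\gets A$, $y\in A$. A play is an infinite path or a finite path ending in a state with no outgoing edge. A general strategy for $P\in\{T,F\}$ maps each finite path whose last state $s\in S_P$ has an outgoing edge to an outgoing edge of $s$; a positional strategy depends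 only on the last state. $\mathfrak S_g(P)$, $\mathfrak S_p(P)$ are the sets of general and positional strategies for $P$. $\mathrm{play}(s,\sigma,\tau)$ is the unique play starting at $s$ consistent with $\sigma$ (for $T$) and $\tau$ (for $F$), where a path $s_0s_1\cdots$ is consistent with a strategy $\rho$ of $P$ if $\rho(s_0\cdots s_i)=(s_i,s_{i+1})$ whenever $s_i\in S_P$ and $s_{i+1}$ exists. For a play $p$, $b_p$ is the sequence obtained by deleting rule symbols; for $x\in\mathcal F_d$, $u(x,\sigma,\tau)=\mathcal I(\mathcal B(b_{\mathrm{play}(x,\sigma,\tau)}))$. *)

From Stdlib Require Import List Classical ClassicalEpsilon.
Import ListNotations.
Set Implicit Arguments.

Inductive TV : Type := Tt | Ff | Uu.

Definition negTV (v : TV) : TV :=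
  match v with Tt => Ff | Ff => Tt | Uu => Uu end.

(* Truth order f <_t u <_t t.  lub / glb of an arbitrary subset of the
   3-element chain (supL of the empty set is f, infL of the empty set is t). *)
Definition supL (P : TV -> Prop) : TV :=
  if excluded_middle_informative (P Tt) then Tt
  else if excluded_middle_informative (P Uu) then Uu else Ff.

Definition infL (P : TV -> Prop) : TV :=
  if excluded_middle_informative (P Ff) then Ff
  else if excluded_middle_informative (P Uu) then Uu else Tt.

Inductive branch (F : Type) : Type :=
| BInf (s : nat -> F)
| BFin (s : list F).

Record jsystem : Type := JSystem {
  Fact : Type;
  lit : TV -> Fact;
  neg : Fact -> Fact;
  Fd : Fact -> Prop;
  R : Fact -> (Fact -> Prop) -> Prop;
  Bev : branch Fact -> Fact;
  lit_inj : forall l1 l2, lit l1 = lit l2 -> l1 = l2;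
  neg_invol : forall x, neg (neg x) = x;
  neg_lit : forall l, neg (lit l) = lit (negTV l);
  neg_neq : forall x, x <> lit Uu -> neg x <> x;
  Fd_neg : forall x, Fd x <-> Fd (neg x);
  Fd_lit : forall l, ~ Fd (lit l);
  R_head : forall x A, R x A -> Fd x;
  R_body_ne : forall x A, R x A -> exists y, A y;
  Fd_has_rule : forall x, Fd x -> exists A, R x A
}.

Definition is_interp (JS : jsystem) (I : Fact JS -> TV) : Prop :=
  (forall x, I (neg JS x) = negTV (I x)) /\ (forall l, I (lit JS l) = l).

Record justif (F : Type) : Type := Justif {
  Node : Type;
  Edge : Node -> Node -> Prop;
  lab : Node -> F
}.

Section Justifications.
Variable JS : jsystem.
Local Notation F := (Fact JS).

Definition is_justification (J : justif F) : Prop :=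
  forall n, (exists m, Edge J n m) ->
    Fd JS (lab J n) /\
    R JS (lab J n) (fun y => exists m, Edge J n m /\ lab J m = y).

Definition graph_like (J : justif F) : Prop :=
  forall n m, lab J n = lab J m -> n = m.

Definition uadj (J : justif F) (n m : Node J) : Prop := Edge J n m \/ Edge J m n.

Fixpoint uchain (J : justif F) (a : Node J) (l : list (Node J)) : Prop :=
  match l with
  | [] => True
  | b :: l' => uadj J a b /\ uchain J b l'
  end.

(* The underlying undirected graph is acyclic: no loop, no pair of opposite
   edges (a 2-cycle in the underlying multigraph), and no simple cycle
   v_0 - v_1 - ... - v_k - v_0 with k >= 2 and the v_i pairwise distinct. *)
Definition tree_like (J : justif F) : Prop :=
  (forall n, ~ Edge J n n) /\
  (forall n m, Edge J n m -> Edge J m n -> False) /\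
  (forall (v0 v1 v2 : Node J) (l : list (Node J)),
     NoDup (v0 :: v1 :: v2 :: l) ->
     uchain J v0 (v1 :: v2 :: l) ->
     uadj J (last (v2 :: l) v2) v0 -> False).

Definition locally_complete (J : justif F) : Prop :=
  forall n, Fd JS (lab J n) -> exists m, Edge J n m.

Fixpoint echain (J : justif F) (a : Node J) (l : list (Node J)) : Prop :=
  match l with
  | [] => True
  | b :: l' => Edge J a b /\ echain J b l'
  end.

Definition BJ (J : justif F) (n : Node J) (b : branch F) : Prop :=
  (exists p : nat -> Node J,
     p 0 = n /\ (forall i, Edge J (p i) (p (S i))) /\ b = BInf (fun i => lab J (p i)))
  \/
  (exists l : list (Node J),
     echain J n l /\ (forall m, ~ Edge J (last l n) m) /\ b = BFin (map (lab J) (n :: l))).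

Definition val (J : justif F) (n : Node J) (I : F -> TV) : TV :=
  infL (fun v => exists b, BJ J n b /\ v = I (Bev JS b)).

Definition S_g (x : F) (I : F -> TV) : TV :=
  supL (fun v => exists (J : justif F) (n : Node J),
          is_justification J /\ locally_complete J /\ graph_like J /\
          lab J n = x /\ v = val J n I).

Definition S_t (x : F) (I : F -> TV) : TV :=
  supL (fun v => exists (J : justif F) (n : Node J),
          is_justification J /\ locally_complete J /\ tree_like J /\
          lab J n = x /\ v = val J n I).

Definition rule : Type := { p : F * (F -> Prop) | R JS (fst p) (snd p) }.

Inductive state : Type :=
| SF (x : F)
| SR (r : rule).

Definition edge (s s' : state) : Prop :=
  match s, s' with
  | SF x, SR r => fst (proj1_sig r) = x
  | SR r, SF y => snd (proj1_sig r) y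
  | _, _ => False
  end.

Fixpoint gchain (a : state) (l : list state) : Prop :=
  match l with
  | [] => True
  | b :: l' => edge a b /\ gchain b l'
  end.

Definition is_path (p : list state) : Prop :=
  match p with [] => False | s :: l => gchain s l end.

Definition ends_in (p : list state) (s : state) : Prop := exists q, p = q ++ [s].

Definition ownedT (s : state) : Prop := match s with SF _ => True | SR _ => False end.
Definition ownedF (s : state) : Prop := match s with SF _ => False | SR _ => True end.

(* A strategy is a map from finite paths to the chosen successor state
   (equivalently, the chosen outgoing edge of the last state). *)
Definition strategy := list state -> state.

Definition gen_strategy (owned : state -> Prop) (sg : strategy) : Prop :=
  forall p s, is_path p -> ends_in p s -> owned s -> (exists s', edge s s') ->
    edge s (sg p).

Definition stratT_g (sg : strategy) : Prop := gen_strategy ownedT sg.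
Definition stratF_g (sg : strategy) : Prop := gen_strategy ownedF sg.

Definition stratT_p (sg : strategy) : Prop :=
  stratT_g sg /\
  (forall p q s, is_path p -> is_path q -> ends_in p s -> ends_in q s ->
     ownedT s -> (exists s', edge s s') -> sg p = sg q).

Section Play.
Variables (x : F) (sigma tau : strategy).

Definition next (p : list state) : state :=
  match last p (SF x) with SF _ => sigma p | SR _ => tau p end.

Fixpoint pre (n : nat) : list state :=
  match n with
  | 0 => [SF x]
  | S k => let p := pre k in
           if excluded_middle_informative (exists s', edge (last p (SF x)) s')
           then p ++ [next p] else p
  end.

Definition stuck (n : nat) : Prop := ~ exists s', edge (last (pre n) (SF x)) s'.

Fixpoint facts (l : list state) : list F :=
  match l with
  | [] => []
  | SF y :: l' => y :: facts l'
  | SR _ :: l' => facts l'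
  end.

Definition state_fact (s : state) : F :=
  match s with SF y => y | SR r => fst (proj1_sig r) end.

(* b_p : the play with rule states deleted *)
Definition play_branch : branch F :=
  match excluded_middle_informative (exists n, stuck n) with
  | left H => BFin (facts (pre (proj1_sig (constructive_indefinite_description _ H))))
  | right _ => BInf (fun i => state_fact (last (pre (2 * i)) (SF x)))
  end.
End Play.

Definition u (I : F -> TV) (x : F) (sigma tau : strategy) : TV :=
  I (Bev JS (play_branch x sigma tau)).

End Justifications.

(* Each equality compares two suprema in the truth order, and it suffices that
   every element of one set is dominated by an element of the other
   ([supL_dominated]).
   - Justification to strategy ([TrackingStrategy]): T follows a locally
     complete justification J from a node n labelled x, keeping track of a node
     of J.  Every play is then a maximal path of J from n, so the strategy
     secures val(J, n).  In general the tracked node depends on the history; in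
     a graph-like J it is determined by the current fact, giving a positional
     strategy.
   - Strategy to justification ([StrategyTree]): the paths consistent with a
     T-strategy sigma form a tree-like justification, each of whose maximal
     paths is the play of sigma against an F-strategy forcing it
     ([ForcedPlay]).  For positional sigma the facts themselves, with edges
     given by the rules sigma proposes, form a graph-like justification whose
     maximal paths lift to that tree ([BranchLifting]).
   Tree-likeness is obtained from a depth criterion ([DepthCriterion]). *)

From Pilot Require Import Defs.
From Stdlib Require Import List Lia Classical ClassicalEpsilon.
From Stdlib Require Import FunctionalExtensionality PropExtensionality.
Import ListNotations.

Definition rank (v : TV) : nat := match v with Ff => 0 | Uu => 1 | Tt => 2 end.
Definition leT (a b : TV) : Prop := rank a <= rank b.

Lemma leT_refl a : leT a a.
Proof. unfold leT; lia. Qed.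

Lemma leT_trans {a b c} : leT a b -> leT b c -> leT a c.
Proof. unfold leT; lia. Qed.

Lemma leT_antisym {a b} : leT a b -> leT b a -> a = b.
Proof. unfold leT; destruct a, b; simpl; intros; auto; lia. Qed.

Lemma supL_upper {P : TV -> Prop} {v} : P v -> leT v (supL P).
Proof.
  unfold supL, leT; intros Hv.
  repeat destruct excluded_middle_informative; destruct v; simpl; try lia; contradiction.
Qed.

Lemma supL_least (P : TV -> Prop) w : (forall v, P v -> leT v w) -> leT (supL P) w.
Proof.
  unfold supL; intros Hw.
  repeat destruct excluded_middle_informative; auto; unfold leT; simpl; lia.
Qed.

Lemma infL_lower {P : TV -> Prop} {w} : P w -> leT (infL P) w.
Proof.
  unfold infL, leT; intros Hw.
  repeat destruct excluded_middle_informative; destruct w; simpl; try lia; contradiction.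
Qed.

Lemma infL_greatest (P : TV -> Prop) v : (forall w, P w -> leT v w) -> leT v (infL P).
Proof.
  unfold infL; intros Hv.
  repeat destruct excluded_middle_informative; auto; unfold leT; destruct v; simpl; lia.
Qed.

Lemma supL_mono (P Q : TV -> Prop) :
  (forall v, P v -> exists v', Q v' /\ leT v v') -> leT (supL P) (supL Q).
Proof.
  intros H. apply supL_least. intros v Hv.
  destruct (H v Hv) as (v' & Hv' & Hle). exact (leT_trans Hle (supL_upper Hv')).
Qed.

Lemma supL_dominated (P Q : TV -> Prop) :
  (forall v, P v -> exists v', Q v' /\ leT v v') ->
  (forall v, Q v -> exists v', P v' /\ leT v v') -> supL P = supL Q.
Proof. intros HPQ HQP. apply leT_antisym; apply supL_mono; assumption. Qed.

Lemma infL_dominated (P Q : TV -> Prop) :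
  (forall w, Q w -> exists w', P w' /\ leT w' w) -> leT (infL P) (infL Q).
Proof.
  intros H. apply infL_greatest. intros w Hw.
  destruct (H w Hw) as (w' & Hw' & Hle). exact (leT_trans (infL_lower Hw') Hle).
Qed.

Lemma last_cons {A} (a b : A) l : last (b :: l) a = last l b.
Proof.
  revert a b; induction l as [|c l IH]; intros a b; auto.
  change (last (c :: l) a = last (c :: l) b). rewrite !IH. reflexivity.
Qed.

Lemma last_indep {A} (a b : A) l : l <> [] -> last l a = last l b.
Proof. destruct l as [|c l]; [congruence|]. rewrite !last_cons. reflexivity. Qed.

Lemma last_In {A} (a : A) l : In (last l a) (a :: l).
Proof.
  revert a; induction l as [|b l IH]; intros a; [now left|].
  change (In (last (b :: l) a) (a :: b :: l)). rewrite last_cons. right. apply IH.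
Qed.

Lemma last_map {A B} (f : A -> B) a l : last (map f l) (f a) = f (last l a).
Proof.
  revert a; induction l as [|b l IH]; intros a; auto.
  simpl map. rewrite !last_cons. apply IH.
Qed.

Lemma nth_length_cons {A} (a d : A) l : nth (length l) (a :: l) d = last l a.
Proof.
  revert a; induction l as [|b l IH]; intros a; auto.
  rewrite last_cons. apply IH.
Qed.

Lemma app2_inj {A} (p p' : list A) a b a' b' :
  p ++ [a; b] = p' ++ [a'; b'] -> p = p' /\ a = a' /\ b = b'.
Proof.
  change [a; b] with ([a] ++ [b]); change [a'; b'] with ([a'] ++ [b']).
  rewrite !app_assoc. intros H.
  apply app_inj_tail in H as [H ->]. apply app_inj_tail in H as [-> ->]. auto.
Qed.

Section DepthCriterion.
Variables (JS : jsystem) (J : justif (Fact JS)) (depth : Node J -> nat) (step : nat).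
Hypothesis step_pos : 0 < step.
Hypothesis depth_edge : forall {a b}, Edge J a b -> depth b = step + depth a.
Hypothesis parent_unique : forall {a a' b}, Edge J a b -> Edge J a' b -> a = a'.

Lemma echain_depth {l} : forall {a},
  echain JS J a l -> depth (last l a) = depth a + step * length l.
Proof.
  induction l as [|b l IH]; intros a Hl; [simpl; lia|].
  destruct Hl as [Hab Hl]. rewrite last_cons, (IH b Hl), (depth_edge Hab). simpl length. lia.
Qed.

(* An undirected walk without repetition that starts along an edge keeps
   following edges forward: going back up would need a second parent. *)
Lemma uchain_descends {l} : forall {a b},
  NoDup (a :: b :: l) -> Edge J a b -> uchain JS J b l -> echain JS J a (b :: l).
Proof.
  induction l as [|c l IH]; intros a b Hnd Hab Hl; simpl; [tauto|].
  destruct Hl as [[Hbc | Hcb] Hl]; split; [exact Hab| |exact Hab|].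
  - apply IH; auto. inversion Hnd; auto.
  - exfalso. rewrite (parent_unique Hcb Hab) in Hnd.
    inversion Hnd as [|? ? Hna]. apply Hna. simpl; auto.
Qed.

Lemma uchain_snoc_iff l : forall a b,
  uchain JS J a (l ++ [b]) <-> uchain JS J a l /\ uadj JS J (last l a) b.
Proof.
  induction l as [|c l IH]; intros a b; [simpl; tauto|].
  rewrite last_cons. simpl (uchain _ _ a _). rewrite IH. tauto.
Qed.

Lemma uchain_rev {l} : forall {a b}, uchain JS J a (l ++ [b]) -> uchain JS J b (rev l ++ [a]).
Proof.
  induction l as [|c l IH]; intros a b Hl; simpl in *.
  - unfold uadj in *. tauto.
  - destruct Hl as [Hac Hl]. apply uchain_snoc_iff. rewrite last_last.
    split; [exact (IH c b Hl) | unfold uadj in *; tauto].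
Qed.

(* A simple cycle v0 -> v1 - ... - v0 on at least three nodes whose first
   edge points forward is impossible: depth would increase all the way round. *)
Lemma no_forward_cycle {v0 v1 c} :
  NoDup (v0 :: v1 :: c) -> c <> [] -> Edge J v0 v1 -> uchain JS J v1 (c ++ [v0]) -> False.
Proof.
  intros Hnd Hc Hv01 Hcyc. apply uchain_snoc_iff in Hcyc as [Hl Hclose].
  pose proof (echain_depth (uchain_descends Hnd Hv01 Hl)) as Hd.
  rewrite last_cons in Hd. simpl length in Hd.
  destruct c as [|w c]; [congruence|]. simpl length in Hd.
  destruct Hclose as [He | He]; apply depth_edge in He; nia.
Qed.

Lemma tree_like_of_depth : tree_like JS J.
Proof.
  split; [|split].
  - intros a Haa. apply depth_edge in Haa. lia.
  - intros a b Hab Hba. apply depth_edge in Hab. apply depth_edge in Hba. lia.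
  - intros v0 v1 v2 l Hnd Hwalk Hclose.
    set (c := v2 :: l) in *.
    assert (Hcyc : uchain JS J v0 ((v1 :: c) ++ [v0])).
    { apply uchain_snoc_iff. split; [exact Hwalk|].
      rewrite last_cons, (last_indep v1 v2 c) by discriminate. exact Hclose. }
    destruct Hwalk as [[Hv01 | Hv10] _].
    { apply (no_forward_cycle Hnd ltac:(discriminate) Hv01). exact (proj2 Hcyc). }
    set (w := last c v2) in *.
    destruct Hclose as [Hw0 | Hv0w].
    + (* w and v1 would be two distinct parents of v0 *)
      assert (Hwc : In w c) by (unfold w, c; rewrite last_cons; apply last_In).
      rewrite (parent_unique Hw0 Hv10) in Hwc.
      inversion Hnd as [|? ? _ Hnd1]. inversion Hnd1 as [|? ? Hv1]. auto.
    + (* run the cycle backwards: it then starts with the forward edge v0 -> w *)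
      assert (Hc : c = removelast c ++ [w]) by (apply app_removelast_last; discriminate).
      set (c0 := removelast c) in Hc.
      assert (Hrev : rev (v1 :: c) = w :: rev c0 ++ [v1]).
      { rewrite Hc. simpl. rewrite rev_app_distr. reflexivity. }
      apply uchain_rev in Hcyc. rewrite Hrev in Hcyc. destruct Hcyc as [_ Hcyc].
      apply (@no_forward_cycle v0 w (rev c0 ++ [v1])).
      * inversion Hnd as [|? ? Hv0 Hnd1]. constructor.
        -- rewrite <- Hrev, <- in_rev. exact Hv0.
        -- rewrite <- Hrev. apply NoDup_rev. exact Hnd1.
      * destruct (rev c0); discriminate.
      * exact Hv0w.
      * exact Hcyc.
Qed.
End DepthCriterion.

Section GameGraph.
Context {JS : jsystem}.
Local Notation F := (Fact JS).
Local Notation st := (state JS).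

Lemma rule_state_has_edge (r : rule JS) : exists s', edge (SR r) s'.
Proof.
  destruct r as [[y A] HA]. destruct (R_body_ne JS _ _ HA) as [z Hz].
  exists (SF _ z). exact Hz.
Qed.

Lemma fact_state_has_edge_iff (y : F) : (exists s', edge (SF _ y) s') <-> Fd JS y.
Proof.
  split.
  - intros [[z | [[y' A] HA]] He]; simpl in He; [contradiction|].
    subst y'. exact (R_head JS _ _ HA).
  - intros Hy. destruct (Fd_has_rule JS y Hy) as [A HA].
    exists (SR (exist _ (y, A) HA)). reflexivity.
Qed.

Definition some_successor (s : st) : st := epsilon (inhabits s) (fun s' => edge s s').

Lemma some_successor_edge (s : st) : (exists s', edge s s') -> edge s (some_successor s).
Proof. exact (epsilon_spec (inhabits s) (fun s' => edge s s')). Qed.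

Lemma facts_app (l1 l2 : list st) : facts (l1 ++ l2) = facts l1 ++ facts l2.
Proof. induction l1 as [|[] l1 IH]; simpl; rewrite ?IH; reflexivity. Qed.

Lemma gchain_snoc (l : list st) : forall a b,
  gchain a l -> edge (last l a) b -> gchain a (l ++ [b]).
Proof.
  induction l as [|c l IH]; intros a b Hl Hb; [simpl in *; tauto|].
  rewrite last_cons in Hb. destruct Hl. split; auto.
Qed.

Lemma is_path_snoc (p : list st) (d b : st) :
  is_path p -> edge (last p d) b -> is_path (p ++ [b]).
Proof.
  destruct p as [|a l]; [contradiction|].
  rewrite last_cons. apply gchain_snoc.
Qed.

Lemma ends_in_last (p : list st) (d : st) : p <> [] -> ends_in p (last p d).
Proof. intros Hp. exists (removelast p). apply app_removelast_last. exact Hp. Qed.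

Lemma ends_in_last_eq (p : list st) (s d : st) : ends_in p s -> last p d = s.
Proof. intros [q ->]. apply last_last. Qed.

Lemma T_move {sigma : strategy JS} {p : list st} {d : st} {y : F} :
  stratT_g sigma -> is_path p -> last p d = SF _ y -> Fd JS y ->
  exists r, sigma p = SR r /\ fst (proj1_sig r) = y.
Proof.
  intros Hsig Hp Hlast Hy.
  assert (He : edge (SF _ y) (sigma p)).
  { apply Hsig; [exact Hp | | exact I | apply fact_state_has_edge_iff; exact Hy].
    rewrite <- Hlast. apply ends_in_last. destruct p; [contradiction | discriminate]. }
  destruct (sigma p) as [z | r]; [contradiction | eauto].
Qed.
End GameGraph.

Section Plays.
Context {JS : jsystem} {x : Fact JS} {sigma tau : strategy JS}.
Local Notation pre := (pre x sigma tau).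
Local Notation stuck := (stuck x sigma tau).
Local Notation next := (next x sigma tau).

Lemma pre_stuck k : stuck k -> pre (S k) = pre k.
Proof. intros H. simpl. destruct excluded_middle_informative; [contradiction | reflexivity]. Qed.

Lemma pre_not_stuck k : ~ stuck k -> pre (S k) = pre k ++ [next (pre k)].
Proof.
  intros H. simpl. destruct excluded_middle_informative as [_ | Hno]; [reflexivity|].
  exfalso. exact (H Hno).
Qed.

Lemma stuck_forever {k} : stuck k -> forall {m}, k <= m -> pre m = pre k /\ stuck m.
Proof.
  intros Hk m Hm. induction Hm as [|m Hm [IH1 IH2]]; auto.
  assert (E : pre (S m) = pre m) by (apply pre_stuck; exact IH2).
  unfold Defs.stuck. rewrite E, IH1. auto.
Qed.

Lemma pre_nonempty k : pre k <> [].
Proof.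
  induction k as [|k IH]; [discriminate|].
  destruct (classic (stuck k)) as [Hs | Hs].
  - rewrite pre_stuck by exact Hs. exact IH.
  - rewrite pre_not_stuck by exact Hs. intros E. apply app_eq_nil in E as [_ E]. discriminate.
Qed.

Hypotheses (Hsigma : stratT_g sigma) (Htau : stratF_g tau).

Lemma next_edge_of_path k :
  is_path (pre k) -> ~ stuck k -> edge (last (pre k) (SF _ x)) (next (pre k)).
Proof.
  intros Hp Hk. apply NNPP in Hk.
  assert (Hend := ends_in_last (pre k) (SF _ x) (pre_nonempty k)).
  unfold Defs.next. destruct (last (pre k) (SF _ x)) eqn:E.
  - apply Hsigma; auto. exact I.
  - apply Htau; auto. exact I.
Qed.

Lemma pre_is_path k : is_path (pre k).
Proof.
  induction k as [|k IH]; [exact I|].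
  destruct (classic (stuck k)) as [Hs | Hs].
  - rewrite pre_stuck; auto.
  - rewrite pre_not_stuck by exact Hs. apply is_path_snoc with (SF _ x); auto.
    apply next_edge_of_path; auto.
Qed.

Lemma next_edge k : ~ stuck k -> edge (last (pre k) (SF _ x)) (next (pre k)).
Proof. apply next_edge_of_path, pre_is_path. Qed.
End Plays.

Lemma echain_snoc {JS : jsystem} {J : justif (Fact JS)} (l : list (Node J)) :
  forall a b, echain JS J a l -> Edge J (last l a) b -> echain JS J a (l ++ [b]).
Proof.
  induction l as [|c l IH]; intros a b Hl Hb; [simpl in *; tauto|].
  rewrite last_cons in Hb. destruct Hl. split; auto.
Qed.

Lemma echain_nth {JS : jsystem} {J : justif (Fact JS)} (l : list (Node J)) :
  forall a d i, echain JS J a l -> i < length l ->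
  Edge J (nth i (a :: l) d) (nth (S i) (a :: l) d).
Proof.
  induction l as [|b l IH]; intros a d i Hl Hi; simpl in Hi; [lia|].
  destruct Hl as [Hab Hl]. destruct i as [|i]; [exact Hab|].
  apply (IH b d i Hl). lia.
Qed.

(* T follows a locally complete
   justification J from a node n labelled x by keeping track of a node of J:
   at a fact state she plays the rule of J at the tracked node; when F picks a
   body fact z, the tracked node moves to a child labelled z. *)
Section TrackingStrategy.
Context {JS : jsystem}.
Local Notation F := (Fact JS).
Local Notation st := (state JS).
Variables (x : F) (J : justif F) (n : Node J).
Hypotheses (HJ : is_justification JS J) (HLC : locally_complete JS J) (Hn : lab J n = x).

Definition children (m : Node J) : F -> Prop := fun y => exists m', Edge J m m' /\ lab J m' = y.

Definition node_rule {m : Node J} (H : exists m', Edge J m m') : rule JS :=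
  exist _ (lab J m, children m) (proj2 (HJ m H)).

Definition tracking_strategy (track : list st -> Node J) : strategy JS :=
  fun p =>
    match excluded_middle_informative (exists m', Edge J (track p) m') with
    | left H =>
        if excluded_middle_informative (last p (SF _ x) = SF _ (lab J (track p)))
        then SR (node_rule H) else some_successor (last p (SF _ x))
    | right _ => some_successor (last p (SF _ x))
    end.

Lemma tracking_strategy_valid track : stratT_g (tracking_strategy track).
Proof.
  intros p s _ Hend _ Hmove. unfold tracking_strategy.
  rewrite (ends_in_last_eq p s (SF _ x) Hend).
  destruct excluded_middle_informative as [Hint|Hleaf]; [|apply some_successor_edge; exact Hmove].
  destruct excluded_middle_informative as [E|E]; [subst s; reflexivity|].
  apply some_successor_edge; exact Hmove.
Qed.

Lemma tracking_strategy_rule track {p y} :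
  last p (SF _ x) = SF _ y -> lab J (track p) = y -> (exists m', Edge J (track p) m') ->
  exists r, tracking_strategy track p = SR r /\ fst (proj1_sig r) = y /\
    snd (proj1_sig r) = children (track p).
Proof.
  intros Hlast Hlab Hint. unfold tracking_strategy.
  destruct excluded_middle_informative as [H|Hleaf]; [|contradiction].
  destruct excluded_middle_informative as [_|Hne]; [|congruence].
  eexists; split; [reflexivity | split; [exact Hlab | reflexivity]].
Qed.

Section Tracking.
Variable track : list st -> Node J.
Hypothesis track_start : track [SF _ x] = n.
Hypothesis track_T_move : forall p r,
  edge (last p (SF _ x)) (SR r) -> track (p ++ [SR r]) = track p.
Hypothesis track_F_move : forall p r z, children (track (p ++ [SR r])) z ->
  Edge J (track (p ++ [SR r])) (track ((p ++ [SR r]) ++ [SF _ z])) /\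
  lab J (track ((p ++ [SR r]) ++ [SF _ z])) = z.

Variable tau : strategy JS.
Hypothesis Htau : stratF_g tau.
Local Notation sigma := (tracking_strategy track).
Local Notation pre := (pre x sigma tau).
Local Notation stuck := (stuck x sigma tau).

Lemma tracked_T_step {k y} :
  ~ stuck k -> last (pre k) (SF _ x) = SF _ y -> lab J (track (pre k)) = y ->
  exists r, pre (S k) = pre k ++ [SR r] /\ snd (proj1_sig r) = children (track (pre k)) /\
    track (pre (S k)) = track (pre k).
Proof.
  intros Hk Hlast Hlab.
  assert (Hy : Fd JS y).
  { apply fact_state_has_edge_iff. rewrite <- Hlast. exact (NNPP _ Hk). }
  assert (Hint := HLC (track (pre k)) ltac:(rewrite Hlab; exact Hy)).
  destruct (tracking_strategy_rule track Hlast Hlab Hint) as (r & Hr & Hhead & Hbody).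
  assert (E : pre (S k) = pre k ++ [SR r]).
  { rewrite pre_not_stuck by exact Hk. unfold Defs.next. rewrite Hlast, Hr. reflexivity. }
  exists r. split; [exact E | split; [exact Hbody|]].
  rewrite E. apply track_T_move. rewrite Hlast. exact Hhead.
Qed.

Lemma tracked_F_step {k r} :
  ~ stuck k -> last (pre k) (SF _ x) = SR r -> snd (proj1_sig r) = children (track (pre k)) ->
  exists z, pre (S k) = pre k ++ [SF _ z] /\
    Edge J (track (pre k)) (track (pre (S k))) /\ lab J (track (pre (S k))) = z.
Proof.
  intros Hk Hlast Hbody.
  assert (He := next_edge (tracking_strategy_valid track) Htau k Hk).
  assert (E : pre (S k) = pre k ++ [tau (pre k)]).
  { rewrite pre_not_stuck by exact Hk. unfold Defs.next. rewrite Hlast. reflexivity. }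
  unfold Defs.next in He. rewrite Hlast in He.
  destruct (tau (pre k)) as [z | r'] eqn:Ez; [|contradiction].
  exists z. rewrite E. split; [reflexivity|].
  assert (Hsplit : pre k = removelast (pre k) ++ [SR r]).
  { rewrite <- Hlast. apply app_removelast_last, pre_nonempty. }
  simpl in He. rewrite Hbody in He. rewrite Hsplit in He |- *. apply track_F_move. exact He.
Qed.

Definition follows_J (k : nat) : Prop :=
  exists l, echain JS J n l /\ map (lab J) (n :: l) = facts (pre k) /\
    last l n = track (pre k) /\
    (forall y, last (pre k) (SF _ x) = SF _ y -> lab J (track (pre k)) = y) /\
    (forall r, last (pre k) (SF _ x) = SR r -> snd (proj1_sig r) = children (track (pre k))).

Lemma follows_J_always k : follows_J k.
Proof.
  induction k as [|k (l & Hl & Hfacts & Hend & Hfact & Hrule)].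
  - exists []. simpl. rewrite track_start, Hn.
    repeat split; try discriminate. intros y E. injection E as <-. reflexivity.
  - destruct (classic (stuck k)) as [Hk | Hk].
    { exists l. rewrite pre_stuck by exact Hk. auto 6. }
    destruct (last (pre k) (SF _ x)) as [y | r] eqn:Hlast.
    + destruct (tracked_T_step Hk Hlast (Hfact y eq_refl)) as (r & E & Hbody & Htr).
      exists l. rewrite Htr, E, facts_app. simpl facts. rewrite app_nil_r, last_last.
      repeat split; auto; [discriminate | intros r' E'; injection E' as <-; exact Hbody].
    + destruct (tracked_F_step Hk Hlast (Hrule r eq_refl)) as (z & E & Hedge & Hlab).
      exists (l ++ [track (pre (S k))]). split; [|split; [|split; [|split]]].
      * apply echain_snoc; [exact Hl | rewrite Hend; exact Hedge].
      * rewrite app_comm_cons, map_app, Hfacts. cbn [map]. rewrite Hlab, E, facts_app. reflexivity.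
      * apply last_last.
      * intros y. rewrite E at 1. rewrite last_last. intros E'. injection E' as <-. exact Hlab.
      * rewrite E, last_last. discriminate.
Qed.

Lemma tracked_round {k y} :
  ~ stuck k -> ~ stuck (S k) -> last (pre k) (SF _ x) = SF _ y -> lab J (track (pre k)) = y ->
  exists z, last (pre (S (S k))) (SF _ x) = SF _ z /\ lab J (track (pre (S (S k)))) = z /\
    Edge J (track (pre k)) (track (pre (S (S k)))).
Proof.
  intros Hk HSk Hlast Hlab.
  destruct (tracked_T_step Hk Hlast Hlab) as (r & E1 & Hbody & Htr).
  rewrite <- Htr in Hbody.
  assert (Hlast1 : last (pre (S k)) (SF _ x) = SR r) by (rewrite E1; apply last_last).
  destruct (tracked_F_step HSk Hlast1 Hbody) as (z & E2 & Hedge & Hlab2).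
  exists z. rewrite E2 at 1. rewrite last_last, <- Htr. auto.
Qed.

(* A finite play ends where J has a leaf: a stuck fact state is undefined. *)
Lemma tracked_finite_play N : stuck N -> BJ JS J n (BFin (facts (pre N))).
Proof.
  intros HN. destruct (follows_J_always N) as (l & Hl & Hfacts & Hend & Hfact & _).
  right. exists l. split; [exact Hl | split; [|rewrite Hfacts; reflexivity]].
  intros m Hm. apply HN. rewrite Hend in Hm.
  destruct (last (pre N) (SF _ x)) as [y | r] eqn:Hlast.
  - apply fact_state_has_edge_iff. rewrite <- (Hfact y eq_refl).
    exact (proj1 (HJ _ (ex_intro _ m Hm))).
  - apply rule_state_has_edge.
Qed.

(* An infinite play visits fact states at even times, tracing an infinite path of J. *)
Lemma tracked_infinite_play :
  (forall N, ~ stuck N) ->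
  BJ JS J n (BInf (fun i => state_fact (last (pre (2 * i)) (SF _ x)))).
Proof.
  intros Hk.
  assert (Heven : forall i, exists y,
    last (pre (2 * i)) (SF _ x) = SF _ y /\ lab J (track (pre (2 * i))) = y).
  { induction i as [|i (y & Hlast & Hlab)].
    - exists x. simpl. rewrite track_start. auto.
    - destruct (tracked_round (Hk _) (Hk _) Hlast Hlab) as (z & Hz & Hlabz & _).
      exists z. replace (2 * S i) with (S (S (2 * i))) by lia. auto. }
  left. exists (fun i => track (pre (2 * i))). split; [exact track_start | split].
  - intros i. destruct (Heven i) as (y & Hlast & Hlab).
    destruct (tracked_round (Hk _) (Hk _) Hlast Hlab) as (_ & _ & _ & Hedge).
    replace (2 * S i) with (S (S (2 * i))) by lia. exact Hedge.
  - f_equal. apply functional_extensionality. intros i.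
    destruct (Heven i) as (y & Hlast & Hlab). rewrite Hlast, Hlab. reflexivity.
Qed.

Lemma tracked_play_is_branch : BJ JS J n (play_branch x sigma tau).
Proof.
  unfold play_branch. destruct excluded_middle_informative as [Hfin | Hinf].
  - apply tracked_finite_play. exact (proj2_sig (constructive_indefinite_description _ Hfin)).
  - apply tracked_infinite_play. intros N HN. apply Hinf. eauto.
Qed.
End Tracking.

(* With the whole history available, T can track a node of the unfolding of J:
   the tracked node is recomputed from the play by descending to chosen
   children. *)
Definition child (m : Node J) (z : F) : Node J :=
  match excluded_middle_informative (children m z) with
  | left H => proj1_sig (constructive_indefinite_description _ H)
  | right _ => m
  end.

Lemma child_spec m z : children m z -> Edge J m (child m z) /\ lab J (child m z) = z.
Proof.
  intros H. unfold child. destruct excluded_middle_informative as [H'|]; [|contradiction].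
  exact (proj2_sig (constructive_indefinite_description _ H')).
Qed.

(* Tracked node of a history given in reverse order. *)
Fixpoint track_rev (l : list st) : Node J :=
  match l with
  | SF _ z :: SR _ :: rest => child (track_rev rest) z
  | SR _ :: rest => track_rev rest
  | _ => n
  end.

Lemma justification_strategy :
  exists sigma, stratT_g sigma /\
    forall tau, stratF_g tau -> BJ JS J n (play_branch x sigma tau).
Proof.
  exists (tracking_strategy (fun p => track_rev (rev p))).
  split; [apply tracking_strategy_valid|]. intros tau Htau.
  apply tracked_play_is_branch; auto.
  - intros p r _. rewrite rev_unit. reflexivity.
  - intros p r z Hz. rewrite !rev_unit in *. apply child_spec. exact Hz.
Qed.

(* In a graph-like J a fact labels at most one node, so T only needs the
   current fact: the tracked node is the node labelled by it. *)
Definition node_of (y : F) : Node J :=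
  match excluded_middle_informative (exists m, lab J m = y) with
  | left H => proj1_sig (constructive_indefinite_description _ H)
  | right _ => n
  end.

Lemma node_of_lab (HG : graph_like JS J) m : node_of (lab J m) = m.
Proof.
  unfold node_of. destruct excluded_middle_informative as [H|H]; [|exfalso; eauto].
  apply HG. exact (proj2_sig (constructive_indefinite_description _ H)).
Qed.

Lemma graph_justification_positional_strategy :
  graph_like JS J ->
  exists sigma, stratT_p sigma /\
    forall tau, stratF_g tau -> BJ JS J n (play_branch x sigma tau).
Proof.
  intros HG. set (track := fun p => node_of (state_fact (last p (SF _ x)))).
  exists (tracking_strategy track). split; [split|].
  - apply tracking_strategy_valid.
  - intros p q s _ _ Hp Hq _ _. unfold tracking_strategy, track.
    rewrite (ends_in_last_eq p s (SF _ x) Hp), (ends_in_last_eq q s (SF _ x) Hq). reflexivity.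
  - intros tau Htau. apply tracked_play_is_branch; unfold track; auto.
    + simpl. rewrite <- Hn. apply node_of_lab. exact HG.
    + intros p r He. rewrite last_last.
      destruct (last p (SF _ x)); simpl in *; [rewrite He; reflexivity | contradiction].
    + intros p r z (m & Hedge & Hm). rewrite !last_last in *. simpl in *.
      rewrite <- Hm, node_of_lab by exact HG. auto.
Qed.
End TrackingStrategy.

Section BranchLifting.
Context {JS : jsystem}.
Variables (J1 J2 : justif (Fact JS)) (f : Node J2 -> Node J1).
Hypothesis f_lab : forall a, lab J1 (f a) = lab J2 a.
Hypothesis f_edge : forall {a b}, Edge J2 a b -> Edge J1 (f a) (f b).
Hypothesis f_lift : forall {a m}, Edge J1 (f a) m -> exists b, Edge J2 a b /\ f b = m.

Definition lift_step (c : Node J2) (m : Node J1) : Node J2 :=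
  match excluded_middle_informative (exists b, Edge J2 c b /\ f b = m) with
  | left H => proj1_sig (constructive_indefinite_description _ H)
  | right _ => c
  end.

Fixpoint lift_path (a : Node J2) (p : nat -> Node J1) (i : nat) : Node J2 :=
  match i with
  | 0 => a
  | S i => lift_step (lift_path a p i) (p (S i))
  end.

Lemma lift_path_spec a p :
  p 0 = f a -> (forall i, Edge J1 (p i) (p (S i))) ->
  forall i, f (lift_path a p i) = p i /\ Edge J2 (lift_path a p i) (lift_path a p (S i)).
Proof.
  intros Hp0 Hp.
  assert (Hstep : forall i, f (lift_path a p i) = p i ->
    Edge J2 (lift_path a p i) (lift_path a p (S i)) /\ f (lift_path a p (S i)) = p (S i)).
  { intros i Hi. simpl. unfold lift_step. destruct excluded_middle_informative as [H|H].
    - exact (proj2_sig (constructive_indefinite_description _ H)).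
    - exfalso. apply H, f_lift. rewrite Hi. apply Hp. }
  assert (Hf : forall i, f (lift_path a p i) = p i).
  { induction i as [|i IH]; [exact (eq_sym Hp0) | exact (proj2 (Hstep i IH))]. }
  intros i. split; [apply Hf | exact (proj1 (Hstep i (Hf i)))].
Qed.

Lemma chain_lift (l : list (Node J1)) : forall a,
  echain JS J1 (f a) l -> exists l', echain JS J2 a l' /\ map f l' = l.
Proof.
  induction l as [|m l IH]; intros a Hl; [exists []; simpl; auto|].
  destruct Hl as [Ham Hl]. destruct (f_lift Ham) as (b & Hab & <-).
  destruct (IH b Hl) as (l' & Hl' & Hmap). exists (b :: l'). simpl. rewrite Hmap. auto.
Qed.

Lemma branch_lift a b : BJ JS J1 (f a) b -> BJ JS J2 a b.
Proof.
  intros [(p & Hp0 & Hp & ->) | (l & Hl & Hmax & ->)].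
  - left. exists (lift_path a p). split; [reflexivity | split].
    + intros i. apply lift_path_spec; auto.
    + f_equal. apply functional_extensionality. intros i.
      rewrite <- f_lab. f_equal. symmetry. apply lift_path_spec; auto.
  - right. destruct (chain_lift l a Hl) as (l' & Hl' & <-).
    exists l'. split; [exact Hl' | split].
    + intros m Hm. apply (Hmax (f m)). rewrite last_map. apply f_edge. exact Hm.
    + f_equal. change (f a :: map f l') with (map f (a :: l')). rewrite map_map.
      apply map_ext. intros c. apply f_lab.
Qed.
End BranchLifting.

(* The nodes of the strategy tree
   are the paths from x ending in a fact state; the children of such a path p
   are the extensions p . sigma(p) . z for z in the body of the rule sigma(p).
   Every other list of states is an isolated node labelled by the literal u,
   which is not a defined fact. *)
Section StrategyTree.
Context {JS : jsystem}.
Local Notation F := (Fact JS).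
Local Notation st := (state JS).
Variables (x : F) (sigma : strategy JS).
Hypothesis Hsig : stratT_g sigma.

Definition round (p q : list st) : Prop :=
  exists r z, sigma p = SR r /\ edge (last p (SF _ x)) (SR r) /\ snd (proj1_sig r) z /\
    q = p ++ [SR r; SF _ z].

Definition at_fact (p : list st) : Prop := is_path p /\ exists y, last p (SF _ x) = SF _ y.

Definition tree_lab (p : list st) : F :=
  if excluded_middle_informative (at_fact p) then state_fact (last p (SF _ x)) else lit JS Uu.

Definition tree_edge (p q : list st) : Prop := is_path p /\ round p q.

Definition strategy_tree : justif F := Justif tree_edge tree_lab.

Lemma tree_lab_fact {p y} : is_path p -> last p (SF _ x) = SF _ y -> tree_lab p = y.
Proof.
  intros Hp Hlast. unfold tree_lab.
  destruct excluded_middle_informative as [_|H]; [rewrite Hlast; reflexivity|].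
  exfalso. apply H. split; eauto.
Qed.

Lemma last_before_rule {p : list st} {r : rule JS} :
  edge (last p (SF _ x)) (SR r) -> last p (SF _ x) = SF _ (fst (proj1_sig r)).
Proof. destruct (last p (SF _ x)); simpl; [intros ->; reflexivity | contradiction]. Qed.

Lemma round_extension {p r z} :
  is_path p -> edge (last p (SF _ x)) (SR r) -> snd (proj1_sig r) z ->
  is_path (p ++ [SR r; SF _ z]) /\ last (p ++ [SR r; SF _ z]) (SF _ x) = SF _ z.
Proof.
  intros Hp He Hz. change [SR r; SF _ z] with ([SR r] ++ [SF _ z]). rewrite app_assoc.
  split; [|apply last_last].
  apply is_path_snoc with (SF _ x); [apply is_path_snoc with (SF _ x); auto|].
  rewrite last_last. exact Hz.
Qed.

Lemma tree_edge_target {p q} :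
  tree_edge p q -> is_path q /\ exists r z, last p (SF _ x) = SF _ (fst (proj1_sig r)) /\
    sigma p = SR r /\ snd (proj1_sig r) z /\ q = p ++ [SR r; SF _ z] /\ tree_lab q = z.
Proof.
  intros (Hp & r & z & Hr & He & Hz & ->).
  destruct (round_extension Hp He Hz) as [Hq Hlast].
  split; [exact Hq|]. exists r, z. repeat split; auto.
  - apply last_before_rule. exact He.
  - apply tree_lab_fact; auto.
Qed.

Lemma tree_edge_at_fact {p q} : tree_edge p q -> at_fact q.
Proof.
  intros (Hp & r & z & _ & He & Hz & ->).
  destruct (round_extension Hp He Hz) as [Hq Hlast]. split; eauto.
Qed.

Lemma strategy_tree_justification : is_justification JS strategy_tree.
Proof.
  intros p [q Hpq]. simpl in *.
  destruct (tree_edge_target Hpq) as (_ & r & _ & Hlast & Hr & _).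
  assert (Hp : is_path p) by apply Hpq.
  rewrite (tree_lab_fact Hp Hlast).
  split; [exact (R_head JS _ _ (proj2_sig r))|].
  replace (fun w => exists m, tree_edge p m /\ tree_lab m = w) with (snd (proj1_sig r)).
  { exact (proj2_sig r). }
  apply functional_extensionality. intros w. apply propositional_extensionality. split.
  - intros Hw. exists (p ++ [SR r; SF _ w]).
    assert (He : edge (last p (SF _ x)) (SR r)) by (rewrite Hlast; reflexivity).
    split; [split; [exact Hp | exists r, w; auto] |].
    apply tree_lab_fact; apply round_extension; auto.
  - intros (m & Hm & <-). destruct (tree_edge_target Hm) as (_ & r' & z & _ & Hr' & Hz & _ & <-).
    rewrite Hr in Hr'. injection Hr' as <-. exact Hz.
Qed.

Lemma strategy_tree_locally_complete : locally_complete JS strategy_tree.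
Proof.
  intros p Hd. simpl in *. unfold tree_lab in Hd.
  destruct excluded_middle_informative as [(Hp & y & Hlast) | _];
    [|exfalso; exact (Fd_lit JS Uu Hd)].
  rewrite Hlast in Hd. simpl in Hd.
  destruct (T_move Hsig Hp Hlast Hd) as (r & Hr & Hhead).
  destruct (R_body_ne JS _ _ (proj2_sig r)) as [z Hz].
  exists (p ++ [SR r; SF _ z]). split; [exact Hp|].
  exists r, z. rewrite Hlast. auto.
Qed.

(* Each edge adds two states, and a node determines its parent. *)
Lemma strategy_tree_tree_like : tree_like JS strategy_tree.
Proof.
  apply (@tree_like_of_depth JS strategy_tree (@length st) 2); [lia | |].
  - intros p q Hpq. destruct (tree_edge_target Hpq) as (_ & r & z & _ & _ & _ & -> & _).
    rewrite length_app. simpl. lia.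
  - intros p p' q Hpq Hp'q.
    destruct (tree_edge_target Hpq) as (_ & r & z & _ & _ & _ & E & _).
    destruct (tree_edge_target Hp'q) as (_ & r' & z' & _ & _ & _ & E' & _).
    rewrite E in E'. apply app2_inj in E'. tauto.
Qed.

Lemma strategy_tree_root : tree_lab [SF _ x] = x.
Proof. apply tree_lab_fact; [exact I | reflexivity]. Qed.

Lemma tree_chain_facts {l} : forall {a}, echain JS strategy_tree a l -> at_fact a ->
  facts (last l a) = facts a ++ map tree_lab l.
Proof.
  induction l as [|b l IH]; intros a Hl Ha; [simpl; rewrite app_nil_r; reflexivity|].
  destruct Hl as [Hab Hl]. simpl in Hab.
  destruct (tree_edge_target Hab) as (_ & r & z & _ & _ & _ & Eb & Hlabb).
  rewrite last_cons, IH; [|exact Hl | exact (tree_edge_at_fact Hab)].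
  rewrite Eb at 1. rewrite facts_app. simpl. rewrite Hlabb, <- app_assoc. reflexivity.
Qed.

(* Given a sequence of paths P 0 = [x], P 1, ... in which
   each P (i+1) extends P i by a round (for all i in a downward closed set),
   F has a strategy making the play of sigma pass through every P i: answer
   the rule reached at P i with the fact chosen by P (i+1). *)
Section ForcedPlay.
Variables (P : nat -> list st) (active : nat -> Prop).
Hypothesis active_down : forall i, active (S i) -> active i.
Hypothesis P_start : P 0 = [SF _ x].
Hypothesis P_round : forall {i}, active i -> round (P i) (P (S i)).

Lemma active_le {i j} : active i -> j <= i -> active j.
Proof. intros Hi Hj. induction Hj; auto. Qed.

(* The lengths of the P i identify the round a path belongs to. *)
Lemma P_length {i} : (forall j, j < i -> active j) -> length (P i) = 1 + 2 * i.
Proof.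
  induction i as [|i IH]; intros Hact; [rewrite P_start; reflexivity|].
  destruct (P_round (Hact i ltac:(lia))) as (r & z & _ & _ & _ & ->).
  rewrite length_app, IH by (intros; apply Hact; lia). simpl. lia.
Qed.

Definition forced_tau (q : list st) : st :=
  match excluded_middle_informative
          (exists iz : nat * F, active (fst iz) /\ P (S (fst iz)) = q ++ [SF _ (snd iz)]) with
  | left H => SF _ (snd (proj1_sig (constructive_indefinite_description _ H)))
  | right _ => some_successor (last q (SF _ x))
  end.

Lemma forced_tau_valid : stratF_g forced_tau.
Proof.
  intros q s _ Hend Hown Hmove. destruct s as [y | r']; [exact (False_ind _ Hown)|].
  unfold forced_tau. destruct excluded_middle_informative as [H|_].
  - destruct (constructive_indefinite_description _ H) as [[i z] [Hi Eq]]. simpl in *.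
    destruct (P_round Hi) as (r & z' & _ & _ & Hz' & E).
    rewrite E in Eq. change [SR r; SF _ z'] with ([SR r] ++ [SF _ z']) in Eq.
    rewrite app_assoc in Eq. apply app_inj_tail in Eq as [Eq Ez]. injection Ez as <-.
    rewrite <- Eq in Hend. apply (ends_in_last_eq _ _ (SF _ x)) in Hend.
    rewrite last_last in Hend. injection Hend as <-. exact Hz'.
  - rewrite (ends_in_last_eq _ _ (SF _ x) Hend). apply some_successor_edge. exact Hmove.
Qed.

Lemma forced_tau_answer {i r z} :
  active i -> P (S i) = P i ++ [SR r; SF _ z] -> forced_tau (P i ++ [SR r]) = SF _ z.
Proof.
  intros Hi E. unfold forced_tau. destruct excluded_middle_informative as [H|H].
  - destruct (constructive_indefinite_description _ H) as [[i' z'] [Hi' E']]. simpl in *.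
    assert (i' = i).
    { pose proof (P_length (i := S i') (fun j Hj => active_le (j := j) Hi' ltac:(lia))) as L'.
      pose proof (P_length (i := i) (fun j Hj => active_le (j := j) Hi ltac:(lia))) as L.
      rewrite E', length_app in L'. simpl in L'. rewrite length_app in L'. simpl in L'. lia. }
    subst i'. rewrite E, <- app_assoc in E'. apply app_inv_head in E'.
    injection E' as ->. reflexivity.
  - exfalso. apply H. exists (i, z). simpl. rewrite E, <- app_assoc. auto.
Qed.

Local Notation pre := (pre x sigma forced_tau).
Local Notation stuck := (stuck x sigma forced_tau).

Lemma forced_round {i} :
  active i -> pre (2 * i) = P i ->
  ~ stuck (2 * i) /\ ~ stuck (S (2 * i)) /\ pre (S (S (2 * i))) = P (S i).
Proof.
  intros Hi E. destruct (P_round Hi) as (r & z & Hr & He & Hz & EP).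
  assert (N1 : ~ stuck (2 * i)) by (unfold Defs.stuck; rewrite E; intros C; apply C; eauto).
  assert (E1 : pre (S (2 * i)) = P i ++ [SR r]).
  { rewrite pre_not_stuck by exact N1. unfold Defs.next. rewrite E, (last_before_rule He), Hr.
    reflexivity. }
  assert (N2 : ~ stuck (S (2 * i))).
  { unfold Defs.stuck. rewrite E1, last_last. intros C. apply C, rule_state_has_edge. }
  split; [exact N1 | split; [exact N2|]].
  rewrite pre_not_stuck by exact N2. unfold Defs.next. rewrite E1, last_last.
  rewrite (forced_tau_answer Hi EP), EP, <- app_assoc. reflexivity.
Qed.

Lemma forced_prefix i : (forall j, j < i -> active j) -> pre (2 * i) = P i.
Proof.
  induction i as [|i IH]; intros Hact; [simpl; rewrite P_start; reflexivity|].
  replace (2 * S i) with (S (S (2 * i))) by lia.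
  apply forced_round; [apply Hact; lia | apply IH; intros; apply Hact; lia].
Qed.

Lemma forced_not_stuck {i} : active i -> ~ stuck (2 * i) /\ ~ stuck (S (2 * i)).
Proof.
  intros Hi. destruct (forced_round Hi) as (N1 & N2 & _); [|auto].
  apply forced_prefix. intros j Hj. apply (active_le Hi). lia.
Qed.

Lemma forced_stuck_late {N i} : stuck N -> active i -> S (2 * i) < N.
Proof.
  intros HN Hi. destruct (forced_not_stuck Hi) as [N1 N2].
  destruct (Compare_dec.le_lt_dec N (2 * i)) as [Hle | Hlt].
  - exfalso. apply N1. exact (proj2 (stuck_forever HN Hle)).
  - destruct (PeanoNat.Nat.eq_dec N (S (2 * i))) as [-> | Hne]; [contradiction | lia].
Qed.
End ForcedPlay.

Lemma forced_play_finite (P : nat -> list st) (K : nat) :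
  P 0 = [SF _ x] -> (forall i, i < K -> round (P i) (P (S i))) ->
  ~ (exists s', edge (last (P K) (SF _ x)) s') ->
  exists tau, stratF_g tau /\ play_branch x sigma tau = BFin (facts (P K)).
Proof.
  intros P0 HP Hend. set (active := fun i => i < K).
  assert (Hdown : forall i, active (S i) -> active i) by (unfold active; intros; lia).
  exists (forced_tau P active). split; [exact (forced_tau_valid P active HP)|].
  assert (EK : pre x sigma (forced_tau P active) (2 * K) = P K)
    by (apply (forced_prefix P active Hdown P0 HP); unfold active; auto).
  assert (SK : stuck x sigma (forced_tau P active) (2 * K))
    by (unfold Defs.stuck; rewrite EK; exact Hend).
  unfold play_branch. destruct excluded_middle_informative as [Hfin | Hinf]; [|exfalso; eauto].
  destruct (constructive_indefinite_description _ Hfin) as [N HN]. simpl.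
  assert (HKN : 2 * K <= N).
  { destruct K as [|K]; [lia|].
    pose proof (forced_stuck_late P active Hdown P0 HP (i := K) HN ltac:(unfold active; lia)).
    lia. }
  rewrite (proj1 (stuck_forever SK HKN)), EK. reflexivity.
Qed.

Lemma forced_play_infinite (P : nat -> list st) :
  P 0 = [SF _ x] -> (forall i, round (P i) (P (S i))) ->
  exists tau, stratF_g tau /\
    play_branch x sigma tau = BInf (fun i => state_fact (last (P i) (SF _ x))).
Proof.
  intros P0 HP. set (active := fun _ : nat => True).
  assert (Hdown : forall i, active (S i) -> active i) by (unfold active; auto).
  assert (HP' : forall i, active i -> round (P i) (P (S i))) by auto.
  exists (forced_tau P active). split; [exact (forced_tau_valid P active HP')|].
  unfold play_branch. destruct excluded_middle_informative as [[N HN] | _].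
  - exfalso. pose proof (forced_stuck_late P active Hdown P0 HP' (i := N) HN I). lia.
  - f_equal. apply functional_extensionality. intros i.
    rewrite (forced_prefix P active Hdown P0 HP'); [reflexivity | unfold active; auto].
Qed.

Lemma strategy_tree_infinite_branch (p : nat -> list st) :
  p 0 = [SF _ x] -> (forall i, tree_edge (p i) (p (S i))) ->
  exists tau, stratF_g tau /\ play_branch x sigma tau = BInf (fun i => tree_lab (p i)).
Proof.
  intros Hp0 Hp.
  destruct (forced_play_infinite p Hp0 (fun i => proj2 (Hp i))) as (tau & Htau & Hplay).
  exists tau. split; [exact Htau|]. rewrite Hplay. f_equal.
  apply functional_extensionality. intros i.
  destruct (Hp i) as (Hpath & r & z & _ & He & _).
  rewrite (tree_lab_fact Hpath (last_before_rule He)), (last_before_rule He). reflexivity.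
Qed.

(* A finite maximal path of the strategy tree from the root ends at a path
   whose last fact is undefined, hence is a finite play of sigma. *)
Lemma strategy_tree_finite_branch (l : list (Node strategy_tree)) :
  echain JS strategy_tree [SF _ x] l -> (forall m, ~ tree_edge (last l [SF _ x]) m) ->
  exists tau, stratF_g tau /\ play_branch x sigma tau = BFin (map tree_lab ([SF _ x] :: l)).
Proof.
  intros Hl Hmax. set (P := fun i => nth i ([SF _ x] :: l) [SF _ x]).
  assert (HP : forall i, i < length l -> round (P i) (P (S i))).
  { intros i Hi. exact (proj2 (echain_nth l _ _ _ Hl Hi)). }
  assert (Hlast : P (length l) = last l [SF _ x]) by apply nth_length_cons.
  assert (Hroot : at_fact [SF _ x]) by (split; [exact I | exists x; reflexivity]).
  assert (Hend : at_fact (P (length l))).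
  { destruct l as [|q l]; [exact Hroot|].
    exact (tree_edge_at_fact (echain_nth (q :: l) _ [SF _ x] (length l) Hl
      (PeanoNat.Nat.lt_succ_diag_r _))). }
  destruct (forced_play_finite P (length l) eq_refl HP) as (tau & Htau & Hplay).
  { destruct Hend as (Hpath & y & Hy). rewrite Hy. intros Hmove.
    apply fact_state_has_edge_iff in Hmove.
    destruct (strategy_tree_locally_complete (P (length l))) as [m Hm].
    { change (Fd JS (tree_lab (P (length l)))). rewrite (tree_lab_fact Hpath Hy). exact Hmove. }
    apply (Hmax m). rewrite <- Hlast. exact Hm. }
  exists tau. split; [exact Htau|]. rewrite Hplay, Hlast, (tree_chain_facts Hl Hroot).
  simpl. rewrite strategy_tree_root. reflexivity.
Qed.

Lemma strategy_tree_branch_is_play b :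
  BJ JS strategy_tree [SF _ x] b -> exists tau, stratF_g tau /\ play_branch x sigma tau = b.
Proof.
  intros [(p & Hp0 & Hp & ->) | (l & Hl & Hmax & ->)].
  - exact (strategy_tree_infinite_branch p Hp0 Hp).
  - exact (strategy_tree_finite_branch l Hl Hmax).
Qed.
End StrategyTree.

(* From a positional strategy for T to a graph-like justification: the nodes
   are the facts themselves, with edges from a defined fact y to the body of
   the rule sigma proposes at y.  Its maximal paths are images of maximal
   paths of the strategy tree, hence plays. *)
Section PositionalStrategyGraph.
Context {JS : jsystem}.
Local Notation F := (Fact JS).
Local Notation st := (state JS).
Variables (x : F) (sigma : strategy JS).
Hypothesis Hsig : stratT_p sigma.

Definition fact_edge (y z : F) : Prop :=
  Fd JS y /\ exists r, sigma [SF _ y] = SR r /\ snd (proj1_sig r) z.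

Definition strategy_graph : justif F := Justif fact_edge (fun y => y).

Lemma positional_move {p d y} :
  is_path p -> last p d = SF _ y -> Fd JS y -> sigma p = sigma [SF _ y].
Proof.
  intros Hp Hlast Hy. apply (proj2 Hsig) with (SF _ y); try exact I.
  - exact Hp.
  - rewrite <- Hlast. apply ends_in_last. destruct p; [contradiction | discriminate].
  - exists []. reflexivity.
  - apply fact_state_has_edge_iff. exact Hy.
Qed.

Lemma positional_rule {y} : Fd JS y -> exists r, sigma [SF _ y] = SR r /\ fst (proj1_sig r) = y.
Proof. intros Hy. exact (T_move (p := [SF _ y]) (d := SF _ y) (proj1 Hsig) I eq_refl Hy). Qed.

Lemma strategy_graph_justification : is_justification JS strategy_graph.
Proof.
  intros y [z [Hy _]]. simpl in *. split; [exact Hy|].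
  destruct (positional_rule Hy) as (r & Hr & Hhead).
  replace (fun w => exists m, fact_edge y m /\ m = w) with (snd (proj1_sig r)).
  { rewrite <- Hhead. exact (proj2_sig r). }
  apply functional_extensionality. intros w. apply propositional_extensionality. split.
  - intros Hw. exists w. split; [split; [exact Hy | exists r; auto] | reflexivity].
  - intros (m & (_ & r' & Hr' & Hm) & <-). rewrite Hr in Hr'. injection Hr' as <-. exact Hm.
Qed.

Lemma strategy_graph_locally_complete : locally_complete JS strategy_graph.
Proof.
  intros y Hy. simpl in *. destruct (positional_rule Hy) as (r & Hr & _).
  destruct (R_body_ne JS _ _ (proj2_sig r)) as [z Hz].
  exists z. split; [exact Hy | exists r; auto].
Qed.

Lemma strategy_graph_graph_like : graph_like JS strategy_graph.
Proof. intros y z E. exact E. Qed.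

(* Labelling nodes of the strategy tree by their last fact maps it onto the
   strategy graph, and edges of the graph lift to the tree. *)
Lemma strategy_graph_branch_is_play b :
  BJ JS strategy_graph x b -> exists tau, stratF_g tau /\ play_branch x sigma tau = b.
Proof.
  intros Hb. apply (strategy_tree_branch_is_play x sigma (proj1 Hsig)).
  rewrite <- (strategy_tree_root x) in Hb.
  revert Hb. apply (branch_lift strategy_graph (strategy_tree x sigma) (tree_lab x)).
  - reflexivity.
  - intros p q Hpq.
    destruct (tree_edge_target x sigma Hpq) as (_ & r & z & Hlast & Hr & Hz & _ & Hlabq).
    destruct Hpq as [Hp _]. simpl.
    assert (Hy := R_head JS _ _ (proj2_sig r)).
    rewrite (tree_lab_fact x Hp Hlast), Hlabq.
    split; [exact Hy | exists r]. rewrite <- (positional_move Hp Hlast Hy). auto.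
  - intros p z [Hy (r & Hr & Hz)]. simpl in *. unfold tree_lab in *.
    destruct excluded_middle_informative as [(Hp & y & Hlast) | _];
      [|exfalso; exact (Fd_lit JS Uu Hy)].
    rewrite Hlast in Hy, Hr. simpl in Hy, Hr.
    rewrite <- (positional_move Hp Hlast Hy) in Hr.
    destruct (T_move (proj1 Hsig) Hp Hlast Hy) as (r' & Hr' & Hhead).
    rewrite Hr in Hr'. injection Hr' as <-.
    assert (He : edge (last p (SF _ x)) (SR r)) by (rewrite Hlast; exact Hhead).
    exists (p ++ [SR r; SF _ z]). split.
    + split; [exact Hp | exists r, z; auto].
    + apply (tree_lab_fact x); apply (round_extension x); auto.
Qed.
End PositionalStrategyGraph.

Section Values.
Context {JS : jsystem}.
Variables (I : Fact JS -> TV) (x : Fact JS) (sigma : strategy JS).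
Variables (J : justif (Fact JS)) (n : Node J).

Definition strategy_value : TV :=
  infL (fun w => exists tau, stratF_g tau /\ w = u I x sigma tau).

Lemma val_le_strategy_value :
  (forall tau, stratF_g tau -> BJ JS J n (play_branch x sigma tau)) ->
  leT (val JS J n I) strategy_value.
Proof.
  intros Hplays. apply infL_dominated. intros w (tau & Htau & ->).
  exists (u I x sigma tau). split; [exists (play_branch x sigma tau); auto | apply leT_refl].
Qed.

Lemma strategy_value_le_val :
  (forall b, BJ JS J n b -> exists tau, stratF_g tau /\ play_branch x sigma tau = b) ->
  leT strategy_value (val JS J n I).
Proof.
  intros Hbranches. apply infL_dominated. intros w (b & Hb & ->).
  destruct (Hbranches b Hb) as (tau & Htau & <-).
  exists (u I x sigma tau). split; [exists tau; auto | apply leT_refl].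
Qed.
End Values.

(* Each justification value is dominated by the value of the strategy following
   it, and each strategy value by the value of its strategy tree or graph. *)
Theorem mainTheorem6 (JS : jsystem) (x : Fact JS) (I : Fact JS -> TV) :
  @Fd JS x -> @is_interp JS I ->
  @S_t JS x I =
    supL (fun v => exists sigma, @stratT_g JS sigma /\
      v = infL (fun w => exists tau, @stratF_g JS tau /\ w = @u JS I x sigma tau))
  /\
  @S_g JS x I =
    supL (fun v => exists sigma, @stratT_p JS sigma /\
      v = infL (fun w => exists tau, @stratF_g JS tau /\ w = @u JS I x sigma tau)).
Proof.
  intros _ _. split; apply supL_dominated.
  - intros v (J & n & HJ & HLC & _ & Hn & ->).
    destruct (justification_strategy x J n HJ HLC Hn) as (sigma & Hsig & Hplays).
    exists (strategy_value I x sigma).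
    split; [exists sigma; auto | apply val_le_strategy_value, Hplays].
  - intros v (sigma & Hsig & ->).
    exists (val JS (strategy_tree x sigma) [SF _ x] I). split.
    + exists (strategy_tree x sigma), [SF _ x].
      split; [apply strategy_tree_justification|].
      split; [apply strategy_tree_locally_complete, Hsig|].
      split; [apply strategy_tree_tree_like | split; [apply strategy_tree_root | reflexivity]].
    + apply strategy_value_le_val, strategy_tree_branch_is_play, Hsig.
  - intros v (J & n & HJ & HLC & HG & Hn & ->).
    destruct (graph_justification_positional_strategy x J n HJ HLC Hn HG)
      as (sigma & Hsig & Hplays).
    exists (strategy_value I x sigma).
    split; [exists sigma; auto | apply val_le_strategy_value, Hplays].
  - intros v (sigma & Hsig & ->).
    exists (val JS (strategy_graph sigma) x I). split.
    + exists (strategy_graph sigma), x.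
      split; [apply strategy_graph_justification, Hsig |].
      split; [apply strategy_graph_locally_complete, Hsig |].
      split; [apply strategy_graph_graph_like | split; reflexivity].
    + apply strategy_value_le_val, strategy_graph_branch_is_play, Hsig.
Qed.
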